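(* Let $A$ be a T-brace whose additive group is torsion-free. If $A$ is Smoktunowicz-nilpotent, then $A$ is abelian (i.e. $a\star b=0$ for all $a,b\in A$).
   Context: A (left) brace is a set $A$ with two operations $+$ and $\cdot$ such that $(A,+)$ is an abelian group, $(A,\cdot)$ is a group, and $a(b+c)=ab+ac-a$ for all $a,b,c\in A$. Put $a\star b=ab-a-b$. For subsets $K,L$, $K\star L$ denotes the subgroup of $(A,+)$ generated by all $x\star y$ with $x\in K,y\in L$. A subbrace is a subset which is a subgroup of both $(A,+)$ and $(A,\cdot)$; a subbrace $L$ is an ideal if $a\star z, z\star a\in L$ for all $a\in A$, $z\in L$. $A$ is a T-brace if whenever $I$ is an ideal of $J$ and $J$ is an ideal of $A$, then $I$ is an ideal of $A$. Define $A^{(1)}=A$, $A^{(n+1)}=A^{(n)}\star A$ and $A^1=A$, $A^{n+1}=A\star A^n$. $A$ is Smoktunowicz-nilpotent if $A^{(n)}=0$ and $A^k=0$ for some natural numbers $n,k$. *)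

From mathcomp Require Import all_boot all_algebra.
Set Implicit Arguments. Unset Strict Implicit. Unset Printing Implicit Defensive.
Import GRing.Theory.
Local Open Scope ring_scope.

Section Brace.
Variable T : zmodType.
Variables (mul : T -> T -> T) (one : T) (inv : T -> T).

Definition is_brace : Prop :=
  [/\ (forall a b c, mul a (mul b c) = mul (mul a b) c),
      (forall a, mul one a = a /\ mul a one = a),
      (forall a, mul (inv a) a = one /\ mul a (inv a) = one)
    & (forall a b c, mul a (b + c) = mul a b + mul a c - a)].

Definition star (a b : T) : T := mul a b - a - b.

Definition add_subgroup (H : T -> Prop) : Prop :=
  H 0 /\ (forall x y, H x -> H y -> H (x - y)).

Definition add_gen (S : T -> Prop) : T -> Prop :=
  fun x => forall H, add_subgroup H -> (forall y, S y -> H y) -> H x.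

Definition star_set (K L : T -> Prop) : T -> Prop :=
  add_gen (fun z => exists x y, [/\ K x, L y & z = star x y]).

Definition subbrace (L : T -> Prop) : Prop :=
  [/\ add_subgroup L, L one,
      (forall x y, L x -> L y -> L (mul x y))
    & (forall x, L x -> L (inv x))].

Definition ideal_of (J I : T -> Prop) : Prop :=
  [/\ subbrace I, (forall x, I x -> J x)
    & (forall a z, J a -> I z -> I (star a z) /\ I (star z a))].

Definition fullset : T -> Prop := fun _ => True.

Definition ideal (L : T -> Prop) : Prop := ideal_of fullset L.

Definition T_brace : Prop :=
  forall I J, ideal J -> ideal_of J I -> ideal I.

(* rser n = A^(n+1):  A^(1) = A, A^(n+1) = A^(n) * A *)
Fixpoint rser (n : nat) : T -> Prop :=
  match n with
  | 0 => fullset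
  | n'.+1 => star_set (rser n') fullset
  end.

(* lser n = A^{n+1}:  A^1 = A, A^{n+1} = A * A^n *)
Fixpoint lser (n : nat) : T -> Prop :=
  match n with
  | 0 => fullset
  | n'.+1 => star_set fullset (lser n')
  end.

Definition is_zero_set (S : T -> Prop) : Prop := forall x, S x -> x = 0.

Definition smok_nilpotent : Prop :=
  (exists n, is_zero_set (rser n)) /\ (exists k, is_zero_set (lser k)).

Definition torsion_free : Prop := forall (n : nat) (a : T), a *+ n.+1 = 0 -> a = 0.

Definition brace_abelian : Prop := forall a b, star a b = 0.

End Brace.

From HB Require Import structures.
From mathcomp Require Import all_boot all_algebra.
From mathcomp Require Import zify.
Set Implicit Arguments. Unset Strict Implicit. Unset Printing Implicit Defensive.
Import GRing.Theory.
Local Open Scope ring_scope.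

(* Let [ann] be the annihilator {u | a * u = u * a = 0 for all a}. Since
   A^(n) = 0, it suffices to show that A^(m+1) <= ann implies A^(m) <= ann,
   i.e. that an ideal R with R * A <= ann lies in ann.  For w in R, the set
   Zw + Z(w * w) is an ideal of {y in R | y in Zw + ann}, which is an ideal
   of R; two applications of the T-property make it an ideal of A.  Taking
   w = 2z shows z * 2z = 2(z * z) in Z2z + 4Z(z * z); cancelling 2 gives
   (1 - 2e)(z * z) = cz, so z * z = 0 by torsion-freeness (if c <> 0, then
   c(a * z) = a * (cz) = 0 for every a).  Hence Zz is an ideal: a * z = mz
   and z * a = pz.  Left nilpotency gives m^k z = 0, and (z * a) * a = 0
   gives p^2 z = 0, so both products vanish. *)

Section AdditiveSubgroups.
Variable T : zmodType.
Implicit Types (H S : T -> Prop) (x y : T).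

Lemma add_subgroup0 H : add_subgroup H -> H 0.
Proof. by case. Qed.

Lemma add_subgroupB H x y : add_subgroup H -> H x -> H y -> H (x - y).
Proof. by case=> _; apply. Qed.

Lemma add_subgroupN H x : add_subgroup H -> H x -> H (- x).
Proof. by move=> sH Hx; rewrite -sub0r; apply: add_subgroupB (add_subgroup0 sH) Hx. Qed.

Lemma add_subgroupD H x y : add_subgroup H -> H x -> H y -> H (x + y).
Proof.
by move=> sH Hx Hy; rewrite -[y]opprK; apply: add_subgroupB (add_subgroupN sH Hy).
Qed.

Lemma add_subgroupMn H x {n} : add_subgroup H -> H x -> H (x *+ n).
Proof.
move=> sH Hx; elim: n => [|n IHn]; first exact: add_subgroup0.
by rewrite mulrS; apply: add_subgroupD.
Qed.

Lemma add_subgroupMz H x {k} : add_subgroup H -> H x -> H (x *~ k).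
Proof.
move=> sH Hx; case: k => n; first exact: add_subgroupMn.
by rewrite NegzE mulrNz; apply: (add_subgroupN sH); apply: add_subgroupMn.
Qed.

Lemma add_subgroup_congrD H x y a b : add_subgroup H ->
  H (x - a) -> H (y - b) -> H (x + y - (a + b)).
Proof. by rewrite opprD addrACA; apply: add_subgroupD. Qed.

Lemma add_subgroup_congrB H x y a b : add_subgroup H ->
  H (x - a) -> H (y - b) -> H (x - y - (a - b)).
Proof.
move=> sH xa yb; rewrite (_ : x - y - (a - b) = x - a - (y - b)); first exact: add_subgroupB.
by rewrite !opprB addrACA [RHS]addrACA (addrC (- a)).
Qed.

Lemma add_subgroup_preim (U : zmodType) (f : {additive U -> T}) H :
  add_subgroup H -> add_subgroup (fun u => H (f u)).
Proof.
move=> sH; split=> [|u v Hu Hv]; first by rewrite raddf0; apply: add_subgroup0.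
by rewrite raddfB; apply: add_subgroupB.
Qed.

Lemma add_gen_subgroup S : add_subgroup (add_gen S).
Proof.
split=> [H sH _|x y Sx Sy H sH SH]; first exact: add_subgroup0.
by apply: add_subgroupB; [|apply: Sx|apply: Sy].
Qed.

Lemma add_gen_in S x : S x -> add_gen S x.
Proof. by move=> Sx H _; apply. Qed.

Lemma add_gen_min S H : add_subgroup H -> (forall y, S y -> H y) ->
  forall x, add_gen S x -> H x.
Proof. by move=> sH SH x; apply. Qed.

Lemma torsion_free_mulrzI x k : torsion_free T -> k != 0 -> x *~ k = 0 -> x = 0.
Proof.
move=> tf; case: k => [[|n]|n] // _; first exact: tf.
by rewrite NegzE mulrNz => /eqP; rewrite oppr_eq0 => /eqP; apply: tf.
Qed.

End AdditiveSubgroups.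

Lemma odd_int_neq0 (e : int) : 1 - 2 * e != 0.
Proof. by apply/eqP; lia. Qed.

Section Braces.
Variable T : zmodType.
Variables (mul : T -> T -> T) (one : T) (inv : T -> T).
Hypothesis brace : is_brace mul one inv.
Local Notation star := (star mul).

Lemma mulgA a b c : mul a (mul b c) = mul (mul a b) c.
Proof. by case: brace. Qed.

Lemma mul1g a : mul one a = a.
Proof. by case: brace => _ /(_ a) []. Qed.

Lemma mulg1 a : mul a one = a.
Proof. by case: brace => _ /(_ a) []. Qed.

Lemma mulVg a : mul (inv a) a = one.
Proof. by case: brace => _ _ /(_ a) []. Qed.

Lemma mulgV a : mul a (inv a) = one.
Proof. by case: brace => _ _ /(_ a) []. Qed.

Lemma mulgDr a b c : mul a (b + c) = mul a b + mul a c - a.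
Proof. by case: brace. Qed.

Lemma one0 : one = 0.
Proof.
by have /eqP := mulgDr one 0 0; rewrite !mul1g !addr0 add0r eq_sym oppr_eq0 => /eqP.
Qed.

Lemma mul0g a : mul 0 a = a.
Proof. by rewrite -one0 mul1g. Qed.

Lemma mulg0 a : mul a 0 = a.
Proof. by rewrite -one0 mulg1. Qed.

Lemma mulgE a b : mul a b = a + b + star a b.
Proof. by rewrite /star -[mul a b - a - b]addrA -opprD addrC addNKr. Qed.

Definition lam a x := mul a x - a.

Lemma lamD a : {morph lam a : x y / x + y}.
Proof. by move=> x y; rewrite /lam mulgDr [RHS]addrACA addrA. Qed.

Lemma lamB a : {morph lam a : x y / x - y}.
Proof.
have lamN x : lam a (- x) = - lam a x.
  by apply/eqP; rewrite -subr_eq0 opprK -lamD addNr /lam mulg0 subrr.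
by move=> x y; rewrite lamD lamN.
Qed.

HB.instance Definition _ a := GRing.isZmodMorphism.Build T T (lam a) (lamB a).

Lemma starE a x : star a x = lam a x - x.
Proof. by []. Qed.

Lemma starBr a : {morph star a : x y / x - y}.
Proof.
by move=> x y; rewrite !starE lamB !opprB addrACA [RHS]addrACA (addrC (- x)).
Qed.

HB.instance Definition _ a := GRing.isZmodMorphism.Build T T (star a) (starBr a).

Lemma starDr a : {morph star a : x y / x + y}.
Proof. exact: raddfD. Qed.

Lemma starNr a : {morph star a : x / - x}.
Proof. exact: raddfN. Qed.

Lemma star0r a : star a 0 = 0.
Proof. exact: raddf0. Qed.

Lemma starMzr a x k : star a (x *~ k) = star a x *~ k.
Proof. exact: raddfMz. Qed.

Lemma mulg_lam a x : mul a x = a + lam a x.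
Proof. by rewrite addrC subrK. Qed.

Lemma lam0l x : lam 0 x = x.
Proof. by rewrite /lam mul0g subr0. Qed.

Lemma lamM a b x : lam (mul a b) x = lam a (lam b x).
Proof. by rewrite {1}/lam -mulgA (mulg_lam b) mulgDr addrAC (addrC (mul a b)) addrK. Qed.

Lemma lamV a : lam a (inv a) = - a.
Proof. by rewrite /lam mulgV one0 sub0r. Qed.

Lemma star0l x : star 0 x = 0.
Proof. by rewrite starE lam0l subrr. Qed.

Lemma starMl a b x : star (mul a b) x = star a (star b x) + star a x + star b x.
Proof.
rewrite !starE lamM (lamB a (lam b x) x).
by rewrite [RHS]addrAC subrK [RHS]addrA subrK.
Qed.

Lemma invgE a : inv a = - star a (inv a) - a.
Proof.
have /eqP := mulgE a (inv a); rewrite mulgV one0 addrAC addrC eq_sym addr_eq0.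
by move=> /eqP {1}->; rewrite opprD addrC.
Qed.

Definition ann u := forall a, star a u = 0 /\ star u a = 0.

Lemma ann0 : ann 0.
Proof. by move=> a; rewrite star0r star0l. Qed.

Lemma star_addl_ann p u x : ann u -> star (p + u) x = star p x.
Proof.
move=> u_ann; have [pu0 _] := u_ann p; have [_ ux0] := u_ann x.
have -> : p + u = mul p u by rewrite mulgE pu0 addr0.
by rewrite starMl ux0 star0r add0r addr0.
Qed.

Lemma ann_subgroup : add_subgroup ann.
Proof.
split=> [|u v u_ann v_ann a]; first exact: ann0.
rewrite starBr (proj1 (u_ann a)) (proj1 (v_ann a)) subrr; split=> //.
by rewrite -(star_addl_ann (u - v) a v_ann) subrK; case: (u_ann a).
Qed.

Local Notation ideal := (ideal mul one inv).
Local Notation ideal_of := (ideal_of mul one inv).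
Local Notation fullset := (@fullset T).
Local Notation star_set := (star_set mul).

Lemma ideal_subgroup I : ideal I -> add_subgroup I.
Proof. by case=> [[]]. Qed.

Lemma ideal_starl I a z : ideal I -> I z -> I (star a z).
Proof. by case=> _ _ I_star Iz; case: (I_star a z Logic.I Iz). Qed.

Lemma ideal_starr I a z : ideal I -> I z -> I (star z a).
Proof. by case=> _ _ I_star Iz; case: (I_star a z Logic.I Iz). Qed.

Lemma ideal_lam I a z : ideal I -> I z -> I (lam a z).
Proof.
move=> I_ideal Iz; rewrite -(subrK z (lam a z)) -starE.
exact: add_subgroupD (ideal_subgroup I_ideal) (ideal_starl a I_ideal Iz) Iz.
Qed.

Lemma ideal_conjg I a z : ideal I -> I z -> I (mul (mul a z) (inv a)).
Proof.
move=> I_ideal Iz.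
have -> : mul (mul a z) (inv a) = lam a (z + star z (inv a)).
  rewrite -mulgA mulg_lam mulgE (lamD a (z + inv a)) (lamD a z (inv a)) lamD lamV.
  by rewrite addrCA addrA subrK.
have I_sub := ideal_subgroup I_ideal.
by apply: ideal_lam => //; apply: add_subgroupD => //; apply: ideal_starr.
Qed.

Lemma lam_star_conjg a r b :
  lam a (star r b) = star (mul (mul a r) (inv a)) (lam a b).
Proof.
by rewrite !starE (lamB a (lam r b) b) !lamM -(lamM (inv a)) mulVg one0 lam0l.
Qed.

Lemma ideal_fullset : ideal fullset.
Proof. by split=> //; split. Qed.

Lemma ideal_star_set_full R : ideal R -> ideal (star_set R fullset).
Proof.
move=> R_ideal; set G := star_set R fullset.
have G_sub : add_subgroup G := add_gen_subgroup _.
have G_lam a x : G x -> G (lam a x).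
  apply: (add_gen_min (add_subgroup_preim (lam a) G_sub)) => _ [r [b [Rr _ ->]]].
  rewrite /= lam_star_conjg; apply: add_gen_in.
  by exists (mul (mul a r) (inv a)), (lam a b); split => //; apply: ideal_conjg.
have GR x : G x -> R x.
  apply: add_gen_min (ideal_subgroup R_ideal) _ x => _ [r [b [Rr _ ->]]].
  exact: ideal_starr.
split; [split=> // | by [] | move=> a z _ Gz; split].
- by rewrite one0; apply: add_subgroup0.
- by move=> x y Gx Gy; rewrite mulg_lam; apply: add_subgroupD G_sub Gx (G_lam _ _ Gy).
- move=> x Gx; have -> : inv x = lam (inv x) (- x) by rewrite -lamV -lamM mulVg one0 lam0l.
  exact: G_lam (add_subgroupN G_sub Gx).
- by rewrite starE; apply: add_subgroupB G_sub (G_lam _ _ Gz) Gz.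
- by apply: add_gen_in; exists z, a; split => //; apply: GR.
Qed.

Lemma ideal_rser n : ideal (rser mul n).
Proof. by elim: n => [|n IHn]; [apply: ideal_fullset | apply: ideal_star_set_full]. Qed.

Lemma starDl_ann y1 y2 x : ann (star y1 y2) -> ann (star y2 x) ->
  star (y1 + y2) x = star y1 x + star y2 x.
Proof.
move=> y12_ann y2x_ann.
have -> : y1 + y2 = mul y1 y2 + - star y1 y2 by rewrite mulgE addrK.
rewrite star_addl_ann; last exact: add_subgroupN ann_subgroup y12_ann.
by rewrite starMl (proj1 (y2x_ann y1)) add0r.
Qed.

Lemma lser_multiples a z m : star a z = z *~ m -> forall i, lser mul i (z *~ (m ^+ i)).
Proof.
move=> az_eq; elim=> [|i IHi] //=; apply: add_gen_in.
by exists a, (z *~ (m ^+ i)); split=> //; rewrite starMzr az_eq -mulrzA exprS.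
Qed.

Lemma star_multiple_eq0 k a z m : torsion_free T -> is_zero_set (lser mul k) ->
  star a z = z *~ m -> star a z = 0.
Proof.
move=> tf lser_k0 az_eq; have := lser_k0 _ (lser_multiples az_eq k).
have [/eqP|mk_neq0] := eqVneq (m ^+ k) 0.
  by rewrite expf_eq0 => /andP [_ /eqP m0] _; rewrite az_eq m0 mulr0z.
by move=> /(torsion_free_mulrzI tf mk_neq0) ->; rewrite star0r.
Qed.

Definition star_ann R := forall y, R y -> forall b, ann (star y b).

Definition multiples_mod_ann R w : T -> Prop :=
  fun y => R y /\ exists c : int, ann (y - w *~ c).

Definition zspan2 u v : T -> Prop := fun y => exists c e : int, y = u *~ c + v *~ e.

Section StarAnnihilatedIdeal.
Variable R : T -> Prop.
Hypotheses (R_ideal : ideal R) (R_star_ann : star_ann R).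

Let R_sub : add_subgroup R := ideal_subgroup R_ideal.

Lemma starDl y1 y2 x : R y1 -> R y2 -> star (y1 + y2) x = star y1 x + star y2 x.
Proof. by move=> Ry1 Ry2; apply: starDl_ann; apply: R_star_ann. Qed.

Lemma starNl y x : R y -> star (- y) x = - star y x.
Proof.
move=> Ry; apply/eqP; rewrite -subr_eq0 opprK -starDl ?addNr ?star0l //.
exact: add_subgroupN.
Qed.

Lemma starMzl y x c : R y -> star (y *~ c) x = star y x *~ c.
Proof.
move=> Ry; have starMnl n : star (y *+ n) x = star y x *+ n.
  elim: n => [|n IHn]; first by rewrite !mulr0n star0l.
  by rewrite !mulrS starDl ?IHn //; apply: add_subgroupMn.
case: c => n; first exact: starMnl.
by rewrite NegzE !mulrNz -!pmulrn starNl -?starMnl //; apply: add_subgroupMn.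
Qed.

Lemma ideal_of_multiples_mod_ann w : R w -> ideal_of R (multiples_mod_ann R w).
Proof.
move=> Rw; set J := multiples_mod_ann R w.
have J_ann y : R y -> ann y -> J y.
  by move=> Ry y_ann; split=> //; exists 0; rewrite mulr0z subr0.
have [[_ _ RM RV] _ _] := R_ideal.
split=> [| y [] // | a y Ra [Ry _]]; last first.
  by split; apply: J_ann;
    [exact: ideal_starl | exact: R_star_ann | exact: ideal_starr | exact: R_star_ann].
split.
- split=> [|x y [Rx [c1 x_ann]] [Ry [c2 y_ann]]].
    by apply: J_ann ann0; apply: add_subgroup0.
  split; first exact: add_subgroupB.
  by exists (c1 - c2); rewrite mulrzBr; apply: (add_subgroup_congrB ann_subgroup x_ann y_ann).
- by rewrite one0; apply: J_ann ann0; apply: add_subgroup0.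
- move=> x y [Rx [c1 x_ann]] [Ry [c2 y_ann]]; split; first exact: RM.
  exists (c1 + c2); rewrite mulgE mulrzDr -[w *~ c1 + w *~ c2]addr0.
  apply: (add_subgroup_congrD ann_subgroup (add_subgroup_congrD ann_subgroup x_ann y_ann)).
  by rewrite subr0; apply: R_star_ann.
- move=> x [Rx [c x_ann]]; split; first exact: RV.
  exists (- c); rewrite invgE mulrNz -(sub0r (w *~ c)).
  apply: (add_subgroup_congrB ann_subgroup _ x_ann).
  by rewrite subr0; apply: (add_subgroupN ann_subgroup); apply: R_star_ann.
Qed.

Lemma star_zspan2l w x c e : R w -> star (w *~ c + star w w *~ e) x = star w x *~ c.
Proof.
move=> Rw; rewrite star_addl_ann ?starMzl //.
exact: add_subgroupMz ann_subgroup (R_star_ann Rw w).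
Qed.

Lemma star_zspan2r w c e : R w -> star w (w *~ c + star w w *~ e) = star w w *~ c.
Proof. by move=> Rw; rewrite starDr !starMzr (proj1 (R_star_ann Rw w w)) mul0rz addr0. Qed.

Lemma ideal_of_zspan2 w : R w -> ideal_of (multiples_mod_ann R w) (zspan2 w (star w w)).
Proof.
move=> Rw; set t := star w w; set I := zspan2 w t.
have t_ann : ann t := R_star_ann Rw w.
have I_t k : I (t *~ k) by exists 0, k; rewrite mulr0z add0r.
have I0 : I 0 by rewrite -(mulr0z t); apply: I_t.
have RI y : I y -> R y.
  move=> [c [e ->]]; apply: (add_subgroupD R_sub (add_subgroupMz R_sub Rw)).
  by apply: (add_subgroupMz R_sub); apply: ideal_starl.
split.
- split=> //.
  + split=> // _ _ [c1 [e1 ->]] [c2 [e2 ->]].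
    by exists (c1 - c2), (e1 - e2); rewrite !mulrzBr opprD addrACA.
  + by rewrite one0.
  + move=> _ _ [c1 [e1 ->]] [c2 [e2 ->]]; exists (c1 + c2), (e1 + e2 + c2 * c1).
    rewrite mulgE star_zspan2l // star_zspan2r // -mulrzA.
    by rewrite !mulrzDr addrACA [RHS]addrA.
  + move=> _ [c [e ->]]; set y := w *~ c + t *~ e.
    have Ry : R y by apply: RI; exists c, e.
    have w_inv_y : star w (inv y) = - (t *~ c).
      rewrite {1}(invgE y) starBr starNr (proj1 (R_star_ann Ry (inv y) w)) oppr0 sub0r.
      by rewrite /y star_zspan2r.
    exists (- c), (c * c - e).
    rewrite invgE star_zspan2l // w_inv_y mulNrz opprK -mulrzA.
    by rewrite mulrNz mulrzBr opprD addrCA.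
- move=> y Iy; split; first exact: RI.
  case: Iy => c [e ->]; exists c; rewrite addrAC subrr add0r.
  exact: add_subgroupMz ann_subgroup t_ann.
- move=> a _ [Ra [d a_ann]] [c [e ->]].
  have a_eq : a = w *~ d + (a - w *~ d) by rewrite addrC subrK.
  split.
  + by rewrite a_eq star_addl_ann // starMzl // star_zspan2r // -mulrzA.
  + rewrite star_zspan2l // a_eq starDr starMzr (proj1 (a_ann w)) addr0 -mulrzA.
    exact: I_t.
Qed.

Hypothesis Tbrace : T_brace mul one inv.

Lemma ideal_zspan2 w : R w -> ideal (zspan2 w (star w w)).
Proof.
move=> Rw; apply: (Tbrace _ (ideal_of_zspan2 Rw)).
exact: Tbrace R_ideal (ideal_of_multiples_mod_ann Rw).
Qed.

Hypothesis tf : torsion_free T.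
Variable k : nat.
Hypothesis lser_k0 : is_zero_set (lser mul k).

Lemma star_self_eq0 z : R z -> star z z = 0.
Proof.
move=> Rz; set t := star z z.
have t_ann : ann t := R_star_ann Rz z.
have R2z : R (z *~ 2) := add_subgroupMz R_sub Rz.
have [c [e]] : zspan2 (z *~ 2) (star (z *~ 2) (z *~ 2)) (star z (z *~ 2)).
  apply: ideal_starl (ideal_zspan2 R2z) _.
  by exists 1, 0; rewrite mulr1z mulr0z addr0.
rewrite starMzl // !starMzr -/t => t2_eq.
have t_eq : t = z *~ c + t *~ (2 * e).
  apply/eqP; rewrite -subr_eq0; apply/eqP.
  apply: (torsion_free_mulrzI tf (_ : 2 != 0)) => //.
  by rewrite mulrzBl t2_eq (mulrzDl 2 (z *~ c)) -!mulrzA (mulrC c) (mulrC (2 * e)) subrr.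
have odd_t : t *~ (1 - 2 * e) = z *~ c by rewrite mulrzBr mulr1z {1}t_eq addrK.
have [c0 | c_neq0] := eqVneq c 0.
  by apply: (torsion_free_mulrzI tf (odd_int_neq0 e)); rewrite odd_t c0 mulr0z.
apply: (torsion_free_mulrzI tf c_neq0).
by rewrite -starMzr -odd_t starMzr (proj1 (t_ann z)) mul0rz.
Qed.

Lemma ann_of_star_ann z : R z -> ann z.
Proof.
move=> Rz a; have I_ideal := ideal_zspan2 Rz.
have Iz : zspan2 z (star z z) z by exists 1, 0; rewrite mulr1z mulr0z addr0.
rewrite star_self_eq0 // in I_ideal Iz.
have [c [e]] := ideal_starl a I_ideal Iz; rewrite mul0rz addr0 => az_eq.
have [p [f]] := ideal_starr a I_ideal Iz; rewrite mul0rz addr0 => za_eq.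
split; first exact: star_multiple_eq0 tf lser_k0 az_eq.
have := proj2 (R_star_ann Rz a a); rewrite za_eq starMzl // za_eq -mulrzA.
have [/eqP|pp_neq0] := eqVneq (p * p) 0.
  by rewrite mulf_eq0 orbb => /eqP -> _; rewrite mulr0z.
by move/(torsion_free_mulrzI tf pp_neq0) ->; rewrite mul0rz.
Qed.

End StarAnnihilatedIdeal.

Lemma ann_of_rser_ann k n : T_brace mul one inv -> torsion_free T ->
  is_zero_set (lser mul k) -> (forall x, rser mul n x -> ann x) -> forall x, ann x.
Proof.
move=> Tbrace tf lser_k0; elim: n => [|n IHn] rser_ann; first by move=> x; apply: rser_ann.
apply: IHn => x rx; apply: (ann_of_star_ann (ideal_rser n) _ Tbrace tf lser_k0 rx).
by move=> y ry b; apply: rser_ann; apply: add_gen_in; exists y, b.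
Qed.

End Braces.

Theorem corollary2 (T : zmodType) (mul : T -> T -> T) (one : T) (inv : T -> T) :
  is_brace mul one inv ->
  T_brace mul one inv ->
  torsion_free T ->
  smok_nilpotent mul ->
  brace_abelian mul.
Proof.
move=> brace Tbrace tf [[n rser_n0] [k lser_k0]] a b.
have rser_ann x : rser mul n x -> ann mul x by move/rser_n0 ->; exact: ann0 brace.
exact: proj2 (ann_of_rser_ann brace Tbrace tf lser_k0 rser_ann a b).
Qed.
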